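(* Let $N\ge 1$ and $n\ge 2$ be integers. Let $\phi_0,\phi_1,\phi_2,\dots$ be the orthonormal Hermite polynomials with respect to the weight $M(v)=\frac{1}{\sqrt{2\pi}}e^{-v^2/2}$, i.e. $\int_{\mathbb{R}}\phi_i(v)\phi_j(v)M(v)\,dv=\delta_{ij}$, with $\phi_0=1$, $\phi_1(v)=v$ and $v\phi_k(v)=\sqrt{k}\,\phi_{k-1}(v)+\sqrt{k+1}\,\phi_{k+1}(v)$. Let $0<z_1<\dots<z_N$ be the positive roots of $\phi_{2N}$, and set $v_j=-z_j$, $v_{N+j}=z_j$ for $j=1,\dots,N$. Let $V$ be the $2N\times 2N$ matrix with entries $V_{ij}=\phi_{i}(v_{j+1})$ for $i,j=0,\dots,2N-1$ (so the columns of $V$ correspond to the velocities $v_1,\dots,v_{2N}$ in this order). Let $A$ be the symmetric tridiagonal $2N\times 2N$ matrix with zero diagonal and off-diagonal entries $A_{p-1,p}=A_{p,p-1}=\sqrt{p}$ for $p=1,\dots,2N-1$ (indices from $0$). Define the $N\times 2N$ matrix $B_2=\begin{pmatrix} I_N & (n-1)I_N\end{pmatrix}V^T$. Then $y^TAy\le 0$ for every $y\in\ker(B_2)$. Moreover, if $n\ge 3$, then $y^TAy<0$ for every nonzero $y\in\ker(B_2)$.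
   Context: $I_N$ denotes the $N\times N$ identity matrix. The matrix $B_2$ encodes the boundary condition $B_2U(0,t)=0$ arising from the symmetric coupling condition $f^{(i)}(t,0,v)=\frac{1}{n-1}\sum_{k\ne i}f^{(k)}(t,0,-v)$ ($v>0$) at an $n$-edge network junction, for differences of moment vectors on two edges. *)

From HB Require Import structures.
From mathcomp Require Import all_boot all_order all_algebra.
Set Implicit Arguments. Unset Strict Implicit. Unset Printing Implicit Defensive.
Import Order.TTheory GRing.Theory Num.Theory.
Local Open Scope ring_scope.

Section Defs.
Variable R : rcfType.

(* herm_pair k = (phi_k, phi_(k+1)), orthonormal Hermite polynomials defined by
   phi_0 = 1, phi_1 = X, X phi_k = sqrt k phi_(k-1) + sqrt (k+1) phi_(k+1). *)
Fixpoint herm_pair (k : nat) : {poly R} * {poly R} :=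
  match k with
  | 0 => (1, 'X)
  | k'.+1 =>
      let: (p, q) := herm_pair k' in
      (q, (Num.sqrt (k'.+2)%:R)^-1 *: ('X * q - Num.sqrt (k'.+1)%:R *: p))
  end.

Definition hermite (k : nat) : {poly R} := (herm_pair k).1.

(* velocities v_1..v_2N (index j : 'I_(N+N) corresponds to v_(j+1)):
   first N are -z_j, last N are z_j *)
Definition velocity (N : nat) (z : 'I_N -> R) (j : 'I_(N + N)) : R :=
  match split j with inl k => - z k | inr k => z k end.

Definition Vmat (N : nat) (z : 'I_N -> R) : 'M[R]_(N + N) :=
  \matrix_(i, j) (hermite i).[velocity z j].

Definition Amat (N : nat) : 'M[R]_(N + N) :=
  \matrix_(i, j) (if j == i.+1 :> nat then Num.sqrt (j%:R)
                  else if i == j.+1 :> nat then Num.sqrt (i%:R) else 0).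

Definition B2mat (N n : nat) (z : 'I_N -> R) : 'M[R]_(N, N + N) :=
  row_mx (1%:M) ((n - 1)%:R%:M) *m (Vmat z)^T.

End Defs.

From HB Require Import structures.
From mathcomp Require Import all_boot all_order all_algebra.
From mathcomp Require Import ring lra zify.
Set Implicit Arguments.
Unset Strict Implicit.
Unset Printing Implicit Defensive.
Import Order.TTheory GRing.Theory Num.Theory.
Local Open Scope ring_scope.

(** The matrix [A] is the Jacobi matrix of the three-term recurrence of the
  Hermite polynomials, truncated at [phi_2N]; hence every column
  [(phi_i(v_j))_i] of [V] is an eigenvector of [A] for the eigenvalue [v_j].
  As [A] is symmetric and the [v_j] are distinct, [V^T V] is diagonal with
  positive entries [c_j = sum_k phi_k(v_j)^2], and [c_j] is even in [v_j].
  Writing [y = V u], the condition [B_2 y = 0] reads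
  [u_(-z_k) = -(n-1) u_(z_k)], so that
  [y^T A y = sum_j c_j v_j u_j^2 = (1 - (n-1)^2) sum_k c_k z_k u_(z_k)^2]. *)

Lemma trmx_mul_eigenvectors_is_diag (R : idomainType) m p
    (A : 'M[R]_m) (V : 'M[R]_(m, p)) (d : 'rV[R]_p) :
  A^T = A -> injective (d 0) -> A *m V = V *m diag_mx d ->
  is_diag_mx (V^T *m V).
Proof.
move=> symA d_inj AV; apply/is_diag_mxP => i j neq_ij.
have VAV_r : V^T *m A *m V = V^T *m V *m diag_mx d by rewrite -mulmxA AV mulmxA.
have VAV_l : V^T *m A *m V = diag_mx d *m (V^T *m V).
  by rewrite -symA -trmx_mul AV trmx_mul tr_diag_mx mulmxA.
have /matrixP/(_ i j)/eqP := etrans (esym VAV_r) VAV_l.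
rewrite mul_mx_diag mul_diag_mx !mxE [_ * d 0 j]mulrC -subr_eq0 -mulrBl mulf_eq0.
case/orP=> /eqP // /subr0_eq /d_inj eq_ji.
by move: neq_ij; rewrite eq_ji eqxx.
Qed.

Section Hermite.
Variable R : rcfType.
Local Notation H := (hermite R).

Lemma hermite0 : H 0 = 1. Proof. by []. Qed.
Lemma hermite1 : H 1 = 'X. Proof. by []. Qed.

Lemma hermiteSS k : H k.+2 =
  (Num.sqrt k.+2%:R)^-1 *: ('X * H k.+1 - Num.sqrt k.+1%:R *: H k).
Proof. by rewrite /hermite /=; case: (herm_pair R k). Qed.

Lemma hermite_recurrence k (x : R) : x * (H k).[x] =
  Num.sqrt k.+1%:R * (H k.+1).[x] + Num.sqrt k%:R * (H k.-1).[x].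
Proof.
case: k => [|k]; first by rewrite sqrtr0 sqrtr1 hermite0 hermite1 hornerX hornerC; ring.
have sqrt_neq0 : Num.sqrt k.+2%:R != 0 :> R by rewrite sqrtr_eq0 -ltNge ltr0Sn.
by rewrite hermiteSS !hornerE /= mulfV // mul1r; ring.
Qed.

Lemma hermiteN k (x : R) : (H k).[- x] = (-1) ^+ k * (H k).[x].
Proof.
suff: (H k).[- x] = (-1) ^+ k * (H k).[x] /\
      (H k.+1).[- x] = (-1) ^+ k.+1 * (H k.+1).[x] by case.
elim: k => [|k [IHk IHk1]].
  by rewrite hermite0 hermite1 !hornerE; split => //; ring.
split => //.
rewrite hermiteSS !(hornerZ, hornerD, hornerN, hornerM, hornerX) IHk IHk1 !exprS.
by ring.
Qed.

Lemma hermite_sqr_sum_gt0 m (x : R) : (0 < m)%N ->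
  0 < \sum_(k < m) (H k).[x] ^+ 2.
Proof.
case: m => // m _; rewrite big_ord_recl hermite0 hornerC expr1n.
have : 0 <= \sum_(k < m) (H (bump 0 k)).[x] ^+ 2.
  by apply: sumr_ge0 => k _; apply: sqr_ge0.
lra.
Qed.

Lemma trmx_Amat N : (Amat R N)^T = Amat R N.
Proof.
apply/matrixP => i j; rewrite !mxE.
by have [ij|] := eqVneq (i : nat) j.+1; have [ji|] := eqVneq (j : nat) i.+1 => //; lia.
Qed.

Lemma Amat_mul_hermite_col N (x : R) : root (H (N + N)) x ->
  Amat R N *m \col_i (H i).[x] = x *: \col_i (H i).[x].
Proof.
move=> root_x; apply/matrixP => i j; rewrite (ord1 j) !mxE hermite_recurrence.
have entry k : Amat R N i k * (\col_i (H i).[x]) k 0 =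
    (if k == i.+1 :> nat then Num.sqrt k%:R * (H k).[x] else 0) +
    (if k.+1 == i :> nat then Num.sqrt i%:R * (H k).[x] else 0).
  rewrite !mxE [i == _ :> nat]eq_sym; case: eqP => [->|_].
    by rewrite ifF ?addr0 //; lia.
  by rewrite add0r; case: ifP; rewrite ?mul0r.
rewrite (eq_bigr _ (fun k _ => entry k)) big_split /= -!big_mkcond /=.
rewrite (big_ord1_eq _ (fun k => Num.sqrt k%:R * (H k).[x])); clear entry.
congr (_ + _).
  case: ltnP => [_ //|ge_iN]; have -> : i.+1 = (N + N)%N by have := ltn_ord i; lia.
  by rewrite (rootP root_x) mulr0.
case: i => [[|i] lt_iN] /=; first by rewrite big_pred0 // sqrtr0 mul0r.
rewrite (eq_bigl (fun k : 'I_(N + N) => k == i :> nat)) => [|k]; last by rewrite eqSS.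
by rewrite (big_ord1_eq _ (fun k => Num.sqrt i.+1%:R * (H k).[x])) ltnW.
Qed.

Lemma Amat_Vmat N (z : 'I_N -> R) : (forall j, root (H (N + N)) (velocity z j)) ->
  Amat R N *m Vmat z = Vmat z *m diag_mx (\row_j velocity z j).
Proof.
move=> roots; apply/matrixP => i j.
have /matrixP/(_ i 0) := Amat_mul_hermite_col (roots j).
rewrite mul_mx_diag !mxE mulrC => <-.
by apply: eq_bigr => k _; rewrite !mxE.
Qed.

End Hermite.

Section KernelOfB2.
Variables (R : rcfType) (N : nat) (z : 'I_N -> R).
Hypotheses (N_gt0 : (0 < N)%N) (z_pos : forall k, 0 < z k) (z_inj : injective z).
Hypothesis z_root : forall k, root (hermite R (N + N)) (z k).

Local Notation v := (velocity z).
Local Notation V := (Vmat z).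
Let col_sqnorm j := \sum_(k < N + N) (hermite R k).[v j] ^+ 2.

Lemma velocity_lshift k : v (lshift N k) = - z k.
Proof. by rewrite /velocity (unsplitK (inl _ k)). Qed.

Lemma velocity_rshift k : v (rshift N k) = z k.
Proof. by rewrite /velocity (unsplitK (inr _ k)). Qed.

Lemma velocity_inj : injective v.
Proof.
move=> i j; case: (split_ordP i) => k ->; case: (split_ordP j) => l ->;
  rewrite ?velocity_lshift ?velocity_rshift.
- by move/oppr_inj/z_inj ->.
- by move=> eq_kl; exfalso; have := z_pos k; have := z_pos l; lra.
- by move=> eq_kl; exfalso; have := z_pos k; have := z_pos l; lra.
- by move/z_inj ->.
Qed.

Lemma velocity_root j : root (hermite R (N + N)) (v j).
Proof.
case: (split_ordP j) => k ->; rewrite ?velocity_lshift ?velocity_rshift //.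
by apply/rootP; rewrite hermiteN (rootP (z_root k)) mulr0.
Qed.

Lemma trVmat_Vmat : V^T *m V = diag_mx (\row_j col_sqnorm j).
Proof.
have /diag_mxP[d VV] : is_diag_mx (V^T *m V).
  apply: (trmx_mul_eigenvectors_is_diag (trmx_Amat R N) _ (Amat_Vmat velocity_root)).
  by move=> i j; rewrite !mxE => /velocity_inj.
rewrite VV; congr diag_mx; apply/rowP => j.
have /matrixP/(_ j j) := VV; rewrite !mxE eqxx mulr1n => <-.
by apply: eq_bigr => k _; rewrite !mxE expr2.
Qed.

Lemma col_sqnorm_gt0 j : 0 < col_sqnorm j.
Proof. by rewrite hermite_sqr_sum_gt0 // addn_gt0 N_gt0. Qed.

Lemma col_sqnorm_shift k : col_sqnorm (lshift N k) = col_sqnorm (rshift N k).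
Proof.
rewrite /col_sqnorm velocity_lshift velocity_rshift.
by apply: eq_bigr => i _; rewrite hermiteN exprMn sqrr_sign mul1r.
Qed.

Lemma Vmat_unit : V \in unitmx.
Proof.
suff: V^T *m V \in unitmx by rewrite unitmx_mul => /andP[].
rewrite trVmat_Vmat unitmxE det_diag unitfE; apply/prodf_neq0 => j _.
by rewrite mxE gt_eqF ?col_sqnorm_gt0.
Qed.

Lemma B2mat_Vmat_kernel n (u : 'cV[R]_(N + N)) : B2mat n z *m (V *m u) = 0 ->
  forall k, u (lshift N k) 0 = - (n - 1)%:R * u (rshift N k) 0.
Proof.
move=> /matrixP ker k; have := ker k 0.
rewrite /B2mat -!mulmxA [V^T *m _]mulmxA trVmat_Vmat mul_diag_mx.
rewrite -[\matrix_(i, j) _]vsubmxK mul_row_col mul1mx mul_scalar_mx !mxE.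
rewrite col_sqnorm_shift mulrCA -mulrDr => /eqP.
by rewrite mulf_eq0 gt_eqF ?col_sqnorm_gt0 //= addr_eq0 mulNr => /eqP.
Qed.

Lemma quad_form_Vmat (u : 'cV[R]_(N + N)) :
  ((V *m u)^T *m Amat R N *m (V *m u)) 0 0 =
  \sum_j col_sqnorm j * v j * u j 0 ^+ 2.
Proof.
have -> : (V *m u)^T *m Amat R N *m (V *m u) = u^T *m (V^T *m (Amat R N *m V)) *m u.
  by rewrite trmx_mul !mulmxA.
rewrite (Amat_Vmat velocity_root) [V^T *m _]mulmxA trVmat_Vmat mulmx_diag mxE.
by apply: eq_bigr => j _; rewrite mul_mx_diag !mxE; ring.
Qed.

Lemma col_sqnorm_weighted_sqr_ge0 (u : 'cV[R]_(N + N)) k :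
  0 <= col_sqnorm (rshift N k) * z k * u (rshift N k) 0 ^+ 2.
Proof. by rewrite mulr_ge0 ?sqr_ge0 // mulr_ge0 // ltW // col_sqnorm_gt0. Qed.

Lemma quad_form_kerB2 n (y : 'cV[R]_(N + N)) : B2mat n z *m y = 0 ->
  exists2 u : 'cV[R]_(N + N), y = V *m u &
    (y^T *m Amat R N *m y) 0 0 =
    (1 - (n - 1)%:R ^+ 2) *
    \sum_k col_sqnorm (rshift N k) * z k * u (rshift N k) 0 ^+ 2.
Proof.
move=> ker; set u := invmx V *m y.
have yE : y = V *m u by rewrite mulKVmx ?Vmat_unit.
have ker_u : B2mat n z *m (V *m u) = 0 by rewrite -yE.
exists u => //; rewrite yE quad_form_Vmat big_split_ord mulr_sumr /= -big_split /=.
apply: eq_bigr => k _; rewrite (B2mat_Vmat_kernel ker_u).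
by rewrite velocity_lshift velocity_rshift col_sqnorm_shift; ring.
Qed.

Lemma kerB2_quad_form_le0 n (y : 'cV[R]_(N + N)) :
  (2 <= n)%N -> B2mat n z *m y = 0 ->
  (y^T *m Amat R N *m y) 0 0 <= 0.
Proof.
move=> n_ge2 /quad_form_kerB2[u _ ->]; apply: mulr_le0_ge0.
  by rewrite subr_le0 exprn_ege1 // ler1n; lia.
by apply: sumr_ge0 => k _; apply: col_sqnorm_weighted_sqr_ge0.
Qed.

Lemma kerB2_quad_form_lt0 n (y : 'cV[R]_(N + N)) :
  (3 <= n)%N -> B2mat n z *m y = 0 -> y != 0 ->
  (y^T *m Amat R N *m y) 0 0 < 0.
Proof.
move=> n_ge3 ker y_neq0; have [u yE ->] := quad_form_kerB2 ker.
have ker_u : B2mat n z *m (V *m u) = 0 by rewrite -yE.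
rewrite nmulr_rlt0; last by rewrite subr_lt0 exprn_egt1 // ltr1n; lia.
rewrite lt_def sumr_ge0 => [|k _]; last exact: col_sqnorm_weighted_sqr_ge0.
rewrite andbT; apply: contraNneq y_neq0 => /psumr_eq0P terms_eq0.
have ur0 k : u (rshift N k) 0 = 0.
  have /eqP := terms_eq0 (fun k _ => col_sqnorm_weighted_sqr_ge0 u k) k isT.
  rewrite mulf_eq0 sqrf_eq0 mulf_eq0 (gt_eqF (col_sqnorm_gt0 _)) (gt_eqF (z_pos _)).
  by move=> /eqP.
rewrite yE; suff -> : u = 0 by rewrite mulmx0.
apply/matrixP => j i; rewrite (ord1 i) mxE.
by case: (split_ordP j) => k ->; rewrite ?(B2mat_Vmat_kernel ker_u) ur0 ?mulr0.
Qed.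

End KernelOfB2.

Theorem lemma4p1 (R : rcfType) (N n : nat) (hN : (1 <= N)%N) (hn : (2 <= n)%N)
  (z : 'I_N -> R)
  (z_incr : forall i j : 'I_N, (i < j)%N -> z i < z j)
  (z_pos : forall i, 0 < z i)
  (z_root : forall i, root (hermite R (N + N)) (z i))
  (z_all : forall x : R, 0 < x -> root (hermite R (N + N)) x -> exists i, x = z i) :
  (forall y : 'cV[R]_(N + N), B2mat n z *m y = 0 ->
     ((y^T *m Amat R N *m y) 0 0) <= 0) /\
  ((3 <= n)%N -> forall y : 'cV[R]_(N + N), B2mat n z *m y = 0 -> y != 0 ->
     ((y^T *m Amat R N *m y) 0 0) < 0).
Proof.
have z_inj : injective z.
  by move=> i j eq_z; apply/val_inj/eqP; case: ltngtP => // /z_incr; rewrite eq_z ltxx.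
split => [y|n_ge3 y]; first exact: kerB2_quad_form_le0.
exact: kerB2_quad_form_lt0.
Qed.
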